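(* In the calculus $\lambda^{RE}$ described in the context, parallel reduction is a forward simulation: if $e_1\Rrightarrow e_2$ and $e_1\to e_1'$, then there exists $e_2'$ such that $e_2\to^*e_2'$ and $e_1'\Rrightarrow e_2'$.
   Context: Syntax of $\lambda^{RE}$. Basic types $b ::= \mathsf{Bool}\mid\mathsf{Unit}$. Constants $c ::= \mathsf{true}\mid\mathsf{false}\mid\mathsf{unit}\mid (=_b)\mid (=_{(c,b)})$. Expressions $e ::= c\mid x\mid e\ e\mid \lambda x{:}\tau.\,e\mid \mathsf{BEq}_b\ e\ e\ e\mid \mathsf{XEq}_{x:\tau\to\tau}\ e\ e\ e$. Values $v ::= c\mid \lambda x{:}\tau.\,e\mid \mathsf{BEq}_b\ e\ e\ v\mid \mathsf{XEq}_{x:\tau\to\tau}\ e\ e\ v$. Types $\tau ::= \{x{:}b\mid e\}\mid x{:}\tau\to\tau\mid \mathsf{PEq}_{\tau}\{e\}\{e\}$. $e[x:=e']$ is capture-avoiding substitution. Reduction: evaluation contexts $E ::= \bullet\mid E\ e\mid v\ E\mid \mathsf{BEq}_b\ e\ e\ E\mid\mathsf{XEq}_{x:\tau\to\tau}\ e\ e\ E$; $E[e]\to E[e']$ if $e\to e'$; $(\lambda x{:}\tau.\,e)\ v\to e[x:=v]$; $(=_b)\ c_1\to(=_{(c_1,b)})$; $(=_{(c_1,b)})\ c_2\to\mathsf{true}$ if $c_1,c_2$ syntactically equal, else $\to\mathsf{false}$. $\to^*$ is the reflexive–transitive closure. Parallel reduction $e\Rrightarrow e'$ and $\tau\Rrightarrow\tau'$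 is defined inductively: $x\Rrightarrow x$; $c\Rrightarrow c$; $\lambda x{:}\tau.e\Rrightarrow\lambda x{:}\tau'.e'$ if $\tau\Rrightarrow\tau'$, $e\Rrightarrow e'$; $e_1\ e_2\Rrightarrow e_1'\ e_2'$ if $e_i\Rrightarrow e_i'$; $(\lambda x{:}\tau.e)\ v\Rrightarrow e'[x:=v']$ if $e\Rrightarrow e'$ and $v\Rrightarrow v'$; $(=_b)\ c_1\Rrightarrow(=_{(c_1,b)})$; $(=_{(c_1,b)})\ c_2\Rrightarrow d$ where $d=\mathsf{true}$ if $c_1,c_2$ are syntactically equal and $\mathsf{false}$ otherwise; $\mathsf{BEq}_b\ e_l\ e_r\ e\Rrightarrow\mathsf{BEq}_b\ e_l'\ e_r'\ e'$ if $e_l\Rrightarrow e_l'$, $e_r\Rrightarrow e_r'$, $e\Rrightarrow e'$; $\mathsf{XEq}_{x:\tau_x\to\tau}\ e_l\ e_r\ e\Rrightarrow\mathsf{XEq}_{x:\tau_x'\to\tau'}\ e_l'\ e_r'\ e'$ if all five components parallel reduce; on types: $\{x{:}b\mid r\}\Rrightarrow\{x{:}b\mid r'\}$ if $r\Rrightarrow r'$; $x{:}\tau_x\to\tau\Rrightarrow x{:}\tau_x'\to\tau'$ if $\tau_x\Rrightarrow\tau_x'$, $\tau\Rrightarrow\tau'$; $\mathsf{PEq}_\tau\{e_l\}\{e_r\}\Rrightarrow\mathsf{PEq}_{\tau'}\{e_l'\}\{e_r'\}$ if all components parallel reduce. *)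

From Stdlib Require Import Arith PeanoNat.

Inductive basic : Type := BBool | BUnit.

Inductive const : Type :=
| CTrue | CFalse | CUnit
| CEq (b : basic)
| CEqC (c : const) (b : basic).

(* Binders: Lam t e binds in e; TRef b r binds in r; TArr tx t binds in t;
   XEq tx t el er e binds only in t (the codomain of the subscript x:tx -> t). *)
Inductive expr : Type :=
| Const (c : const)
| Var (n : nat)
| App (e1 e2 : expr)
| Lam (t : ty) (e : expr)
| BEq (b : basic) (el er e : expr)
| XEq (tx t : ty) (el er e : expr)
with ty : Type :=
| TRef (b : basic) (r : expr)      (* {x:b | r} *)
| TArr (tx t : ty)
| TPEq (t : ty) (el er : expr).

Fixpoint shift_e (d c : nat) (e : expr) : expr :=
  match e with
  | Const k => Const k
  | Var n => if n <? c then Var n else Var (n + d)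
  | App e1 e2 => App (shift_e d c e1) (shift_e d c e2)
  | Lam t e => Lam (shift_t d c t) (shift_e d (S c) e)
  | BEq b el er e => BEq b (shift_e d c el) (shift_e d c er) (shift_e d c e)
  | XEq tx t el er e =>
      XEq (shift_t d c tx) (shift_t d (S c) t)
          (shift_e d c el) (shift_e d c er) (shift_e d c e)
  end
with shift_t (d c : nat) (t : ty) : ty :=
  match t with
  | TRef b r => TRef b (shift_e d (S c) r)
  | TArr tx t => TArr (shift_t d c tx) (shift_t d (S c) t)
  | TPEq t el er => TPEq (shift_t d c t) (shift_e d c el) (shift_e d c er)
  end.

(* capture-avoiding substitution of s for index k (indices above k are decremented) *)
Fixpoint subst_e (k : nat) (s : expr) (e : expr) : expr :=
  match e with
  | Const c => Const c
  | Var n => if n <? k then Var n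
             else if n =? k then shift_e k 0 s
             else Var (pred n)
  | App e1 e2 => App (subst_e k s e1) (subst_e k s e2)
  | Lam t e => Lam (subst_t k s t) (subst_e (S k) s e)
  | BEq b el er e => BEq b (subst_e k s el) (subst_e k s er) (subst_e k s e)
  | XEq tx t el er e =>
      XEq (subst_t k s tx) (subst_t (S k) s t)
          (subst_e k s el) (subst_e k s er) (subst_e k s e)
  end
with subst_t (k : nat) (s : expr) (t : ty) : ty :=
  match t with
  | TRef b r => TRef b (subst_e (S k) s r)
  | TArr tx t => TArr (subst_t k s tx) (subst_t (S k) s t)
  | TPEq t el er => TPEq (subst_t k s t) (subst_e k s el) (subst_e k s er)
  end.

Definition subst0 (e v : expr) : expr := subst_e 0 v e.

Inductive value : expr -> Prop :=
| V_Const c : value (Const c)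
| V_Lam t e : value (Lam t e)
| V_BEq b el er v : value v -> value (BEq b el er v)
| V_XEq tx t el er v : value v -> value (XEq tx t el er v).

Inductive step : expr -> expr -> Prop :=
| S_AppL e1 e1' e2 : step e1 e1' -> step (App e1 e2) (App e1' e2)
| S_AppR v e e' : value v -> step e e' -> step (App v e) (App v e')
| S_BEq b el er e e' : step e e' -> step (BEq b el er e) (BEq b el er e')
| S_XEq tx t el er e e' : step e e' -> step (XEq tx t el er e) (XEq tx t el er e')
| S_Beta t e v : value v -> step (App (Lam t e) v) (subst0 e v)
| S_Eq1 b c1 : step (App (Const (CEq b)) (Const c1)) (Const (CEqC c1 b))
| S_EqT b c1 c2 : c1 = c2 ->
    step (App (Const (CEqC c1 b)) (Const c2)) (Const CTrue)
| S_EqF b c1 c2 : c1 <> c2 ->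
    step (App (Const (CEqC c1 b)) (Const c2)) (Const CFalse).

Inductive star : expr -> expr -> Prop :=
| star_refl e : star e e
| star_step e1 e2 e3 : step e1 e2 -> star e2 e3 -> star e1 e3.

Inductive par_e : expr -> expr -> Prop :=
| P_Var n : par_e (Var n) (Var n)
| P_Const c : par_e (Const c) (Const c)
| P_Lam t t' e e' : par_t t t' -> par_e e e' -> par_e (Lam t e) (Lam t' e')
| P_App e1 e1' e2 e2' : par_e e1 e1' -> par_e e2 e2' -> par_e (App e1 e2) (App e1' e2')
| P_Beta t e e' v v' : value v -> par_e e e' -> par_e v v' ->
    par_e (App (Lam t e) v) (subst0 e' v')
| P_Eq1 b c1 : par_e (App (Const (CEq b)) (Const c1)) (Const (CEqC c1 b))
| P_EqT b c1 c2 : c1 = c2 ->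
    par_e (App (Const (CEqC c1 b)) (Const c2)) (Const CTrue)
| P_EqF b c1 c2 : c1 <> c2 ->
    par_e (App (Const (CEqC c1 b)) (Const c2)) (Const CFalse)
| P_BEq b el el' er er' e e' : par_e el el' -> par_e er er' -> par_e e e' ->
    par_e (BEq b el er e) (BEq b el' er' e')
| P_XEq tx tx' t t' el el' er er' e e' :
    par_t tx tx' -> par_t t t' -> par_e el el' -> par_e er er' -> par_e e e' ->
    par_e (XEq tx t el er e) (XEq tx' t' el' er' e')
with par_t : ty -> ty -> Prop :=
| P_TRef b r r' : par_e r r' -> par_t (TRef b r) (TRef b r')
| P_TArr tx tx' t t' : par_t tx tx' -> par_t t t' -> par_t (TArr tx t) (TArr tx' t')
| P_TPEq t t' el el' er er' : par_t t t' -> par_e el el' -> par_e er er' ->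
    par_t (TPEq t el er) (TPEq t' el' er').

(** A term that steps is not a value, so at a
    congruence step the parallel reduction is itself a congruence and the
    induction hypothesis lifts through the evaluation context.  At a redex,
    parallel reduction either left a redex, which one more step contracts, or
    already contracted it: for the equality constants to the very same constant,
    by determinism of [step]; for beta to a parallel reduct of the contractum,
    by substitutivity of parallel reduction. *)

From Stdlib Require Import PeanoNat Lia.

Set Implicit Arguments.

Scheme expr_mut := Induction for expr Sort Prop
  with ty_mut := Induction for ty Sort Prop.
Combined Scheme expr_ty_ind from expr_mut, ty_mut.

Scheme par_e_mut := Induction for par_e Sort Prop
  with par_t_mut := Induction for par_t Sort Prop.
Combined Scheme par_ind from par_e_mut, par_t_mut.

Ltac index_cases :=
  repeat (simpl; match goal with
  | |- context [?a <? ?b] => destruct (Nat.ltb_spec a b)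
  | |- context [?a =? ?b] => destruct (Nat.eqb_spec a b)
  end); try (f_equal; lia); try lia.

Ltac by_ih := f_equal; match goal with IH : forall _, _ |- _ => apply IH; lia end.

Ltac syntax_induction :=
  apply expr_ty_ind; intros; subst; simpl; try (by_ih; fail).

Lemma shift_shift_fuse :
  (forall e j k c c', c' <= c <= c' + k ->
     shift_e j c (shift_e k c' e) = shift_e (j + k) c' e) /\
  (forall t j k c c', c' <= c <= c' + k ->
     shift_t j c (shift_t k c' t) = shift_t (j + k) c' t).
Proof. syntax_induction. index_cases. Qed.

(** Here and below, compound indices are abstracted as [x] (and [y]) with a
    defining equation, so that the induction hypotheses still unify under
    binders, where these indices are incremented. *)
Lemma shift_shift_comm :
  (forall e d d' c c' x, c' <= c -> x = c + d' ->
     shift_e d x (shift_e d' c' e) = shift_e d' c' (shift_e d c e)) /\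
  (forall t d d' c c' x, c' <= c -> x = c + d' ->
     shift_t d x (shift_t d' c' t) = shift_t d' c' (shift_t d c t)).
Proof. syntax_induction. index_cases. Qed.

Lemma shift_subst_comm :
  (forall e d k m s x y, x = k + m -> y = S x ->
     shift_e d x (subst_e k s e) = subst_e k (shift_e d m s) (shift_e d y e)) /\
  (forall t d k m s x y, x = k + m -> y = S x ->
     shift_t d x (subst_t k s t) = subst_t k (shift_e d m s) (shift_t d y t)).
Proof. syntax_induction. index_cases. apply shift_shift_comm; lia. Qed.

Lemma subst_shift_cancel :
  (forall e u j m c, c <= j <= c + m ->
     subst_e j u (shift_e (S m) c e) = shift_e m c e) /\
  (forall t u j m c, c <= j <= c + m ->
     subst_t j u (shift_t (S m) c t) = shift_t m c t).
Proof. syntax_induction. index_cases. Qed.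

Lemma subst_shift_comm :
  (forall e s j k c x, c <= k -> x = j + k ->
     subst_e x s (shift_e j c e) = shift_e j c (subst_e k s e)) /\
  (forall t s j k c x, c <= k -> x = j + k ->
     subst_t x s (shift_t j c t) = shift_t j c (subst_t k s t)).
Proof. syntax_induction. index_cases. symmetry; apply shift_shift_fuse; lia. Qed.

Lemma subst_subst_comm :
  (forall e s v j k x, x = j + k ->
     subst_e x s (subst_e j v e) = subst_e j (subst_e k s v) (subst_e (S x) s e)) /\
  (forall t s v j k x, x = j + k ->
     subst_t x s (subst_t j v t) = subst_t j (subst_e k s v) (subst_t (S x) s t)).
Proof.
  syntax_induction. index_cases.
  - apply subst_shift_comm; lia.
  - symmetry; apply subst_shift_cancel; lia.
Qed.

Lemma value_shift v d c : value v -> value (shift_e d c v).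
Proof. induction 1; constructor; assumption. Qed.

Lemma value_subst v k s : value v -> value (subst_e k s v).
Proof. induction 1; constructor; assumption. Qed.

Lemma step_not_value e e' : step e e' -> ~ value e.
Proof.
  intros Hs Hv; revert e' Hs; induction Hv; intros e' Hs; inversion Hs; subst;
    eapply IHHv; eassumption.
Qed.

Lemma step_deterministic e e1 e2 : step e e1 -> step e e2 -> e1 = e2.
Proof.
  intros H1; revert e2; induction H1; intros e2' H2; inversion H2; subst;
    try (f_equal; eauto; fail); try congruence;
    match goal with
    | Hs : step _ _ |- _ =>
        exfalso; apply (step_not_value Hs); solve [eauto using value]
    end.
Qed.

Lemma par_refl : (forall e, par_e e e) /\ (forall t, par_t t t).
Proof. apply expr_ty_ind; intros; constructor; assumption. Qed.

Lemma par_shift :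
  (forall e e', par_e e e' -> forall d c, par_e (shift_e d c e) (shift_e d c e')) /\
  (forall t t', par_t t t' -> forall d c, par_t (shift_t d c t) (shift_t d c t')).
Proof.
  apply par_ind; intros; simpl; try (econstructor; eauto; fail).
  - destruct (n <? c); constructor.
  - unfold subst0; rewrite (proj1 shift_subst_comm e' d 0 c v' c (S c)) by lia.
    apply P_Beta; auto using value_shift.
Qed.

Lemma par_subst :
  (forall e e', par_e e e' -> forall k s s', par_e s s' ->
     par_e (subst_e k s e) (subst_e k s' e')) /\
  (forall t t', par_t t t' -> forall k s s', par_e s s' ->
     par_t (subst_t k s t) (subst_t k s' t')).
Proof.
  apply par_ind; intros; simpl; try (econstructor; eauto; fail).
  - destruct (n <? k); [constructor |].
    destruct (n =? k); [apply par_shift; assumption | constructor].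
  - unfold subst0; rewrite (proj1 subst_subst_comm e' s' v' 0 k k) by lia.
    apply P_Beta; auto using value_subst.
Qed.

Lemma par_subst0 e e' v v' : par_e e e' -> par_e v v' -> par_e (subst0 e v) (subst0 e' v').
Proof. intros; apply par_subst; assumption. Qed.

Lemma value_par v v' : par_e v v' -> value v -> value v'.
Proof. induction 1; inversion 1; subst; constructor; auto. Qed.

Lemma par_Const_inv c r : par_e (Const c) r -> r = Const c.
Proof. inversion 1; reflexivity. Qed.

Lemma par_Lam_inv t e r :
  par_e (Lam t e) r -> exists t' e', r = Lam t' e' /\ par_e e e'.
Proof. inversion 1; eauto. Qed.

(** Every contraction rule of [par_e] fires on an application of two values. *)
Lemma par_App_inv e1 e2 r :
  par_e (App e1 e2) r -> ~ value e1 \/ ~ value e2 ->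
  exists e1' e2', r = App e1' e2' /\ par_e e1 e1' /\ par_e e2 e2'.
Proof.
  inversion 1; subst; intros [Hnv | Hnv]; eauto;
    exfalso; apply Hnv; constructor || assumption.
Qed.

Lemma star_one e e' : step e e' -> star e e'.
Proof. intros; econstructor; [eassumption | constructor]. Qed.

Lemma star_map (f : expr -> expr) :
  (forall a b, step a b -> step (f a) (f b)) ->
  forall a b, star a b -> star (f a) (f b).
Proof. intros Hf a b; induction 1; econstructor; eauto. Qed.

Definition par_sim (e e' : expr) : Prop :=
  forall r, par_e e r -> exists r', star r r' /\ par_e e' r'.

Lemma par_sim_AppL e1 e1' e2 :
  ~ value e1 -> par_sim e1 e1' -> par_sim (App e1 e2) (App e1' e2).
Proof.
  intros Hnv Hsim r Hpar.
  destruct (par_App_inv Hpar (or_introl Hnv)) as (f1 & f2 & -> & H1 & H2).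
  destruct (Hsim _ H1) as (x & Hx & Hpx); exists (App x f2); split.
  - apply (@star_map (fun a => App a f2)); [intros; apply S_AppL |]; assumption.
  - constructor; assumption.
Qed.

Lemma par_sim_AppR v e e' :
  value v -> ~ value e -> par_sim e e' -> par_sim (App v e) (App v e').
Proof.
  intros Hv Hnv Hsim r Hpar.
  destruct (par_App_inv Hpar (or_intror Hnv)) as (f1 & f2 & -> & H1 & H2).
  assert (Hf1 : value f1) by exact (value_par H1 Hv).
  destruct (Hsim _ H2) as (x & Hx & Hpx); exists (App f1 x); split.
  - apply (@star_map (App f1)); [intros; apply S_AppR |]; assumption.
  - constructor; assumption.
Qed.

Lemma par_sim_BEq b el er e e' :
  par_sim e e' -> par_sim (BEq b el er e) (BEq b el er e').
Proof.
  intros Hsim r Hpar.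
  inversion Hpar as [| | | | | | | | ? ? el' ? er' ? f Hl Hr H |]; subst.
  destruct (Hsim _ H) as (x & Hx & Hpx); exists (BEq b el' er' x); split.
  - apply (@star_map (BEq b el' er')); [intros; apply S_BEq |]; assumption.
  - constructor; assumption.
Qed.

Lemma par_sim_XEq tx t el er e e' :
  par_sim e e' -> par_sim (XEq tx t el er e) (XEq tx t el er e').
Proof.
  intros Hsim r Hpar.
  inversion Hpar as [| | | | | | | | | ? tx' ? t' ? el' ? er' ? f Htx Ht Hl Hr H];
    subst.
  destruct (Hsim _ H) as (x & Hx & Hpx); exists (XEq tx' t' el' er' x); split.
  - apply (@star_map (XEq tx' t' el' er')); [intros; apply S_XEq |]; assumption.
  - constructor; assumption.
Qed.

Lemma par_sim_beta t e v :
  value v -> par_sim (App (Lam t e) v) (subst0 e v).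
Proof.
  intros Hv r Hpar.
  inversion Hpar as [| | | ? f1 ? v' Hf Hvv' | ? ? e' ? v' _ He Hvv' | | | | |];
    subst.
  - destruct (par_Lam_inv Hf) as (t' & e' & -> & He).
    exists (subst0 e' v'); split.
    + apply star_one, S_Beta, (value_par Hvv' Hv).
    + apply par_subst0; assumption.
  - exists (subst0 e' v'); split; [constructor | apply par_subst0; assumption].
Qed.

Lemma par_sim_const_redex c1 c2 e' :
  step (App (Const c1) (Const c2)) e' -> par_sim (App (Const c1) (Const c2)) e'.
Proof.
  intros Hstep r Hpar; exists e'; split; [| apply par_refl].
  inversion Hpar as [| | | ? ? ? ? H1 H2 | | | | | |]; subst;
    [rewrite (par_Const_inv H1), (par_Const_inv H2); exact (star_one Hstep) | ..].
  all: match goal with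
       | |- star ?c _ => assert (e' = c) as -> by
           (apply (step_deterministic Hstep); constructor; auto)
       end; constructor.
Qed.

Theorem lemmaC5 : forall e1 e2 e1' : expr,
  par_e e1 e2 -> step e1 e1' ->
  exists e2' : expr, star e2 e2' /\ par_e e1' e2'.
Proof.
  intros e1 r e1' Hpar Hstep; revert r Hpar; change (par_sim e1 e1').
  induction Hstep as [e1 e1' e2 Hstep IH | v e e' Hv Hstep IH | | | | | |].
  - exact (par_sim_AppL (step_not_value Hstep) IH).
  - exact (par_sim_AppR Hv (step_not_value Hstep) IH).
  - apply par_sim_BEq; assumption.
  - apply par_sim_XEq; assumption.
  - apply par_sim_beta; assumption.
  - apply par_sim_const_redex, S_Eq1.
  - apply par_sim_const_redex, S_EqT; assumption.
  - apply par_sim_const_redex, S_EqF; assumption.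
Qed.
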